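(* The category of event structures with equivalence does not have all pullbacks: there exist an ese $C$ whose equivalence is the identity relation and maps $f:A\to C$, $g:B\to C$ of ese's (where $A$ and $B$ are even edc's) such that no pullback of $f$ and $g$ exists in the category of ese's. (Since $\equiv_C$ is the identity, no pseudo pullback of $f$ and $g$ exists either.)
   Context: An event structure with equivalence (ese) $(P,\le,\mathrm{Con},\equiv)$: a prime event structure (partial order $\le$ with finite down-sets; nonempty subset-closed family $\mathrm{Con}$ of finite subsets containing singletons, with $X\in\mathrm{Con}$, $e\le e'\in X\Rightarrow X\cup\{e\}\in\mathrm{Con}$) with an equivalence relation $\equiv$ on $P$. Configurations: down-closed sets with all finite subsets in $\mathrm{Con}$. A map of ese's $f:P\to Q$ is a partial function such that if $p_1\equiv_P p_2$ then $f(p_1),f(p_2)$ are both undefined or both defined with $f(p_1)\equiv_Q f(p_2)$; and for every finite configuration $x$ of $P$, $fx$ is a finite configuration of $Q$ and $p_1,p_2\in x$, $f(p_1)\equiv_Q f(p_2)$ imply $p_1\equiv_P p_2$. Maps compose as partial functions; the category of ese's is ordinary category with these maps. An edc is an ese in which $p_1,p_2\le p$ and $p_1\equiv p_2$ imply $p_1=p_2$. A pullback of $f,g$ is a pullback in the usual categorical sense. A pseudo pullback is an object $D$ with maps $p:D\to A$, $q:D\to B$ with $f\circ p\equiv g\circ q$ such that for any $D'$, $p',q'$ with $f\circ p'\equiv g\circ q'$ there is a unique $h:D'\to D$ with $p'=p\circ h$, $q'=q\circ h$; here two maps are equivalent iff they are defined on the same elements and pointwise $\equiv$-equivalent. *)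

From Stdlib Require Import List.
Set Implicit Arguments.

Definition finite_set (T : Type) (X : T -> Prop) : Prop :=
  exists l : list T, forall x, X x -> In x l.

Definition subset_of (T : Type) (X Y : T -> Prop) : Prop := forall x, X x -> Y x.

Record ese := {
  ev : Type;
  le : ev -> ev -> Prop;
  Con : (ev -> Prop) -> Prop;
  eqv : ev -> ev -> Prop;
  le_refl : forall e, le e e;
  le_antisym : forall e e', le e e' -> le e' e -> e = e';
  le_trans : forall e1 e2 e3, le e1 e2 -> le e2 e3 -> le e1 e3;
  le_finite_down : forall e, finite_set (fun x => le x e);
  Con_finite : forall X, Con X -> finite_set X;
  Con_nonempty : exists X, Con X;
  Con_subset : forall X Y, Con X -> subset_of Y X -> Con Y;
  Con_singleton : forall e, Con (fun x => x = e);
  Con_down : forall X e e', Con X -> le e e' -> X e' -> Con (fun x => X x \/ x = e);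
  eqv_refl : forall e, eqv e e;
  eqv_sym : forall e e', eqv e e' -> eqv e' e;
  eqv_trans : forall e1 e2 e3, eqv e1 e2 -> eqv e2 e3 -> eqv e1 e3
}.

Definition configuration (P : ese) (x : ev P -> Prop) : Prop :=
  (forall e e', x e' -> le P e e' -> x e) /\
  (forall Y, subset_of Y x -> finite_set Y -> Con P Y).

Definition finite_configuration (P : ese) (x : ev P -> Prop) : Prop :=
  configuration P x /\ finite_set x.

Definition pimage {P Q : ese} (f : ev P -> option (ev Q)) (x : ev P -> Prop)
  : ev Q -> Prop := fun q => exists p, x p /\ f p = Some q.

Definition is_map {P Q : ese} (f : ev P -> option (ev Q)) : Prop :=
  (forall p1 p2, eqv P p1 p2 ->
     (f p1 = None /\ f p2 = None) \/
     (exists q1 q2, f p1 = Some q1 /\ f p2 = Some q2 /\ eqv Q q1 q2)) /\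
  (forall x, finite_configuration P x ->
     finite_configuration Q (pimage f x) /\
     (forall p1 p2 q1 q2, x p1 -> x p2 -> f p1 = Some q1 -> f p2 = Some q2 ->
        eqv Q q1 q2 -> eqv P p1 p2)).

Definition pcomp {P Q R : ese} (g : ev Q -> option (ev R)) (f : ev P -> option (ev Q))
  : ev P -> option (ev R) :=
  fun p => match f p with Some q => g q | None => None end.

Definition map_eq {P Q : ese} (f1 f2 : ev P -> option (ev Q)) : Prop :=
  forall p, f1 p = f2 p.

Definition map_equiv {P Q : ese} (f1 f2 : ev P -> option (ev Q)) : Prop :=
  forall p, (f1 p = None /\ f2 p = None) \/
            (exists a b, f1 p = Some a /\ f2 p = Some b /\ eqv Q a b).

Definition is_edc (P : ese) : Prop :=
  forall p1 p2 p, le P p1 p -> le P p2 p -> eqv P p1 p2 -> p1 = p2.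

Definition is_pullback {A B C : ese} (f : ev A -> option (ev C)) (g : ev B -> option (ev C))
  (D : ese) (p : ev D -> option (ev A)) (q : ev D -> option (ev B)) : Prop :=
  is_map p /\ is_map q /\ map_eq (pcomp f p) (pcomp g q) /\
  forall (D' : ese) (p' : ev D' -> option (ev A)) (q' : ev D' -> option (ev B)),
    is_map p' -> is_map q' -> map_eq (pcomp f p') (pcomp g q') ->
    exists h : ev D' -> option (ev D),
      is_map h /\ map_eq p' (pcomp p h) /\ map_eq q' (pcomp q h) /\
      forall h' : ev D' -> option (ev D),
        is_map h' -> map_eq p' (pcomp p h') -> map_eq q' (pcomp q h') -> map_eq h' h.

Definition has_pullback {A B C : ese} (f : ev A -> option (ev C)) (g : ev B -> option (ev C))
  : Prop := exists D p q, is_pullback f g D p q.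

Definition is_pseudo_pullback {A B C : ese} (f : ev A -> option (ev C)) (g : ev B -> option (ev C))
  (D : ese) (p : ev D -> option (ev A)) (q : ev D -> option (ev B)) : Prop :=
  is_map p /\ is_map q /\ map_equiv (pcomp f p) (pcomp g q) /\
  forall (D' : ese) (p' : ev D' -> option (ev A)) (q' : ev D' -> option (ev B)),
    is_map p' -> is_map q' -> map_equiv (pcomp f p') (pcomp g q') ->
    exists h : ev D' -> option (ev D),
      is_map h /\ map_eq p' (pcomp p h) /\ map_eq q' (pcomp q h) /\
      forall h' : ev D' -> option (ev D),
        is_map h' -> map_eq p' (pcomp p h') -> map_eq q' (pcomp q h') -> map_eq h' h.

Definition has_pseudo_pullback {A B C : ese} (f : ev A -> option (ev C)) (g : ev B -> option (ev C))
  : Prop := exists D p q, is_pseudo_pullback f g D p q.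

From Stdlib Require Import List.
Import ListNotations.
Set Implicit Arguments.

(* Take A = B = {e0, e0', e1} with e0 < e1 and e0 == e0', C a single event and
   f, g nowhere defined, so that a pullback of f and g is a product A x A.
   Over the event (e1, e1) a product would need one event with the history
   {(e0,e0)} and, at the same time, with the history {(e0,e0'), (e0',e0)}:
   test objects realising each history separately have mediating maps that
   must coincide on a test object realising both.  Hence the image of
   (e1, e1) has no history at all, and the second projection would send the
   configuration {(e1, e1)} to the set {e1}, which is not down-closed. *)

Lemma finite_set_empty (T : Type) : finite_set (fun _ : T => False).
Proof. exists []. intros x []. Qed.

Lemma finite_set_singleton (T : Type) (e : T) : finite_set (fun x => x = e).
Proof. exists [e]. intros x ->. now left. Qed.

Lemma finite_set_subset (T : Type) (X Y : T -> Prop) :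
  finite_set X -> subset_of Y X -> finite_set Y.
Proof. intros [l Hl] HYX. exists l. intros x Hx. now apply Hl, HYX. Qed.

Lemma finite_set_add (T : Type) (X : T -> Prop) (e : T) :
  finite_set X -> finite_set (fun x => X x \/ x = e).
Proof. intros [l Hl]. exists (e :: l). intros x [Hx| ->]; [right; auto | now left]. Qed.

Section FiniteEse.

Variables (T : Type) (enum : list T) (enumP : forall x, In x enum).
Variable leb : T -> T -> bool.
Hypothesis leb_refl : forall e, leb e e = true.
Hypothesis leb_antisym : forall e e', leb e e' = true -> leb e' e = true -> e = e'.
Hypothesis leb_trans :
  forall e1 e2 e3, leb e1 e2 = true -> leb e2 e3 = true -> leb e1 e3 = true.
Variable eqvb : T -> T -> bool.
Hypothesis eqvb_refl : forall e, eqvb e e = true.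
Hypothesis eqvb_sym : forall e e', eqvb e e' = true -> eqvb e' e = true.
Hypothesis eqvb_trans :
  forall e1 e2 e3, eqvb e1 e2 = true -> eqvb e2 e3 = true -> eqvb e1 e3 = true.

Definition fin_ese : ese :=
  {| ev := T; le := fun u v => leb u v = true; Con := @finite_set T;
     eqv := fun u v => eqvb u v = true;
     le_refl := leb_refl; le_antisym := leb_antisym; le_trans := leb_trans;
     le_finite_down := fun e => ex_intro _ enum (fun x _ => enumP x);
     Con_finite := fun X H => H;
     Con_nonempty := ex_intro _ _ (finite_set_empty T);
     Con_subset := @finite_set_subset T;
     Con_singleton := @finite_set_singleton T;
     Con_down := fun X e _ HX _ _ => finite_set_add e HX;
     eqv_refl := eqvb_refl; eqv_sym := eqvb_sym; eqv_trans := eqvb_trans |}.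

Lemma fin_ese_finite_configuration (x : T -> Prop) :
  (forall e e', x e' -> leb e e' = true -> x e) -> finite_configuration fin_ese x.
Proof.
  intros Hdown. split; [split|].
  - exact Hdown.
  - intros Y _ HY. exact HY.
  - exists enum. intros e _. apply enumP.
Qed.

End FiniteEse.

Lemma is_map_of_lifting (P Q : ese) (f : ev P -> option (ev Q)) :
  (forall X, finite_set X -> Con Q X) ->
  (forall p1 p2, eqv P p1 p2 ->
     (f p1 = None /\ f p2 = None) \/
     (exists q1 q2, f p1 = Some q1 /\ f p2 = Some q2 /\ eqv Q q1 q2)) ->
  (forall p q q', f p = Some q -> le Q q' q -> exists p', le P p' p /\ f p' = Some q') ->
  (forall p1 p2 q1 q2, f p1 = Some q1 -> f p2 = Some q2 -> eqv Q q1 q2 -> eqv P p1 p2) ->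
  is_map f.
Proof.
  intros HCon Heqv Hlift Hrefl. split; [exact Heqv|].
  intros x [[Hdown _] [l Hl]]. split; [split; [split|] |].
  - intros q' q [p [Hxp Hfp]] Hle.
    destruct (Hlift p q q' Hfp Hle) as [p' [Hp' Hfp']].
    exists p'. split; [eapply Hdown|]; eauto.
  - intros Y _ HY. now apply HCon.
  - exists (flat_map (fun p => match f p with Some q => [q] | None => [] end) l).
    intros q [p [Hxp Hfp]]. apply in_flat_map. exists p.
    split; [auto|]. rewrite Hfp. now left.
  - intros p1 p2 q1 q2 _ _. apply Hrefl.
Qed.

Lemma undefined_is_map (P Q : ese) : is_map (fun _ : ev P => @None (ev Q)).
Proof.
  split; [now left|].
  intros x _. split; [split; [split|] |].
  - intros q' q [p [_ H]]. discriminate.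
  - intros Y HY _. destruct (Con_nonempty Q) as [X HX].
    apply (Con_subset Q HX). intros q Hq. destruct (HY q Hq) as [p [_ H]]. discriminate.
  - exists []. intros q [p [_ H]]. discriminate.
  - intros p1 p2 q1 q2 _ _ H. discriminate.
Qed.

Lemma map_image_down_closed {P Q : ese} {h : ev P -> option (ev Q)} {x : ev P -> Prop}
  {p : ev P} {q q' : ev Q} :
  is_map h -> finite_configuration P x -> x p -> h p = Some q -> le Q q' q ->
  exists p', x p' /\ h p' = Some q'.
Proof.
  intros Hh Hx Hxp Hhp Hle.
  destruct (proj1 (proj2 Hh x Hx)) as [[Hdown _] _].
  exact (Hdown q' q (ex_intro _ p (conj Hxp Hhp)) Hle).
Qed.

Lemma minimal_finite_configuration {D : ese} {d : ev D} :
  (forall d', le D d' d -> d' = d) -> finite_configuration D (fun t => t = d).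
Proof.
  intros Hmin. split; [split|].
  - intros d1 d2 -> Hle. now apply Hmin.
  - intros Y HY _. exact (Con_subset D (Con_singleton D d) HY).
  - apply finite_set_singleton.
Qed.

Definition product_universal (A B D : ese)
  (p : ev D -> option (ev A)) (q : ev D -> option (ev B)) : Prop :=
  forall (D' : ese) (p' : ev D' -> option (ev A)) (q' : ev D' -> option (ev B)),
    is_map p' -> is_map q' ->
    exists h : ev D' -> option (ev D),
      is_map h /\ map_eq p' (pcomp p h) /\ map_eq q' (pcomp q h) /\
      forall h' : ev D' -> option (ev D),
        is_map h' -> map_eq p' (pcomp p h') -> map_eq q' (pcomp q h') -> map_eq h' h.
Arguments product_universal {A B} D p q.

Section UndefinedCospan.

Variables (A B C : ese) (f : ev A -> option (ev C)) (g : ev B -> option (ev C)).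
Hypotheses (f_undef : forall a, f a = None) (g_undef : forall b, g b = None).

Lemma pcomp_undefined_l (D : ese) (p : ev D -> option (ev A)) (d : ev D) :
  pcomp f p d = None.
Proof. unfold pcomp. now destruct (p d). Qed.

Lemma pcomp_undefined_r (D : ese) (q : ev D -> option (ev B)) (d : ev D) :
  pcomp g q d = None.
Proof. unfold pcomp. now destruct (q d). Qed.

Lemma is_pullback_undefined_product D p q :
  is_pullback f g D p q -> product_universal D p q.
Proof.
  intros (_ & _ & _ & U) D' p' q' Hp' Hq'. apply U; [exact Hp' | exact Hq' |].
  intro d. now rewrite pcomp_undefined_l, pcomp_undefined_r.
Qed.

Lemma is_pseudo_pullback_undefined_product D p q :
  is_pseudo_pullback f g D p q -> product_universal D p q.
Proof.
  intros (_ & _ & _ & U) D' p' q' Hp' Hq'. apply U; [exact Hp' | exact Hq' |].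
  intro d. left. now rewrite pcomp_undefined_l, pcomp_undefined_r.
Qed.

End UndefinedCospan.

Ltac finite_cases :=
  intros; repeat match goal with
  | x : ?T |- _ => lazymatch T with
                   | bool => destruct x | unit => destruct x
                   | _ => lazymatch type of T with Set => destruct x end end
  end;
  simpl in *; try reflexivity; try discriminate; try congruence; auto.

Inductive evA : Set := e0 | e0' | e1.

Definition leA (u v : evA) : bool :=
  match u, v with
  | e0, e0 | e0', e0' | e1, e1 | e0, e1 => true
  | _, _ => false
  end.

Definition eqvA (u v : evA) : bool :=
  match u, v with
  | e1, e1 => true
  | e1, _ | _, e1 => false
  | _, _ => true
  end.

Lemma evA_enumP : forall u, In u [e0; e0'; e1].
Proof. destruct u; simpl; tauto. Qed.

Definition A : ese :=
  @fin_ese evA _ evA_enumP leA ltac:(finite_cases) ltac:(finite_cases) ltac:(finite_cases)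
    eqvA ltac:(finite_cases) ltac:(finite_cases) ltac:(finite_cases).

Lemma A_edc : is_edc A.
Proof. unfold is_edc; simpl. finite_cases. Qed.

Definition trivb (u v : unit) : bool := true.

Definition point : ese :=
  @fin_ese unit [tt] ltac:(finite_cases) trivb ltac:(finite_cases) ltac:(finite_cases)
    ltac:(finite_cases) trivb ltac:(finite_cases) ltac:(finite_cases) ltac:(finite_cases).

(* [dij] encodes the pair of events of A with components [e0] (index 0) or
   [e0'] (index 1), and [dtop] encodes [(e1, e1)]. *)
Inductive evT : Set := d00 | d01 | d10 | dtop.

Definition proj_l (u : evT) : option evA :=
  match u with d00 | d01 => Some e0 | d10 => Some e0' | dtop => Some e1 end.

Definition proj_r (u : evT) : option evA :=
  match u with d00 | d10 => Some e0 | d01 => Some e0' | dtop => Some e1 end.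

(* The history of [dtop] consists of the [dij] with [bij = true]. *)
Definition leT (b00 b01 b10 : bool) (u v : evT) : bool :=
  match u, v with
  | d00, d00 | d01, d01 | d10, d10 | dtop, dtop => true
  | d00, dtop => b00 | d01, dtop => b01 | d10, dtop => b10
  | _, _ => false
  end.

Definition eqvT (u v : evT) : bool :=
  match u, v with
  | dtop, dtop => true
  | dtop, _ | _, dtop => false
  | _, _ => true
  end.

Lemma evT_enumP : forall u, In u [d00; d01; d10; dtop].
Proof. destruct u; simpl; tauto. Qed.

Definition test_ese (b00 b01 b10 : bool) : ese :=
  @fin_ese evT _ evT_enumP (leT b00 b01 b10)
    ltac:(finite_cases) ltac:(finite_cases) ltac:(finite_cases)
    eqvT ltac:(finite_cases) ltac:(finite_cases) ltac:(finite_cases).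

Ltac lift_witness :=
  first [ exists d00; split; reflexivity | exists d01; split; reflexivity
        | exists d10; split; reflexivity | exists dtop; split; reflexivity ].

Ltac proj_is_map :=
  apply is_map_of_lifting;
  [ intros X HX; exact HX
  | intros p1 p2 H; right; destruct p1, p2; simpl in H; try discriminate;
    do 2 eexists; repeat split
  | intros p q q' Hp Hle; destruct p; simpl in Hp; injection Hp as <-;
    destruct q'; simpl in Hle; try discriminate; lift_witness
  | intros p1 p2 q1 q2 H1 H2 H; destruct p1, p2; simpl in *;
    injection H1 as <-; injection H2 as <-; simpl in *; congruence ].

Lemma proj_l_is_map (b00 b01 b10 : bool) :
  (b00 || b01)%bool = true -> is_map (P := test_ese b00 b01 b10) (Q := A) proj_l.
Proof. destruct b00, b01; try discriminate; intros _; proj_is_map. Qed.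

Lemma proj_r_is_map (b00 b01 b10 : bool) :
  (b00 || b10)%bool = true -> is_map (P := test_ese b00 b01 b10) (Q := A) proj_r.
Proof. destruct b00, b10; try discriminate; intros _; proj_is_map. Qed.

Lemma is_map_test_ese_refine (b00 b01 b10 c00 c01 c10 : bool) (Q : ese)
  (h : evT -> option (ev Q)) :
  (forall u v, leT b00 b01 b10 u v = true -> leT c00 c01 c10 u v = true) ->
  is_map (P := test_ese b00 b01 b10) h -> is_map (P := test_ese c00 c01 c10) h.
Proof.
  intros Hle [Heqv Hconf]. split; [exact Heqv|].
  intros x [[Hdown Hcon] Hfin]. apply Hconf.
  split; [split|]; [| exact Hcon | exact Hfin].
  intros e e' Hx He. exact (Hdown e e' Hx (Hle e e' He)).
Qed.

Lemma mediator_injective (b00 b01 b10 : bool) (D : ese) (p q : ev D -> option (ev A))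
  (h : ev (test_ese b00 b01 b10) -> option (ev D)) :
  map_eq (P := test_ese b00 b01 b10) (Q := A) proj_l (pcomp p h) ->
  map_eq (P := test_ese b00 b01 b10) (Q := A) proj_r (pcomp q h) ->
  forall u v, h u = h v -> u = v.
Proof.
  intros Hp Hq u v Huv.
  assert (Hl : proj_l u = proj_l v) by (rewrite Hp, Hp; unfold pcomp; now rewrite Huv).
  assert (Hr : proj_r u = proj_r v) by (rewrite Hq, Hq; unfold pcomp; now rewrite Huv).
  destruct u, v; simpl in *; congruence.
Qed.

Lemma no_product_A (D : ese) (p q : ev D -> option (ev A)) :
  is_map q -> ~ product_universal D p q.
Proof.
  intros Hq U.
  destruct (U (test_ese true false false) proj_l proj_r
             (@proj_l_is_map true false false eq_refl)
             (@proj_r_is_map true false false eq_refl))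
    as (h1 & Hh1 & Hp1 & Hq1 & _).
  destruct (U (test_ese false true true) proj_l proj_r
             (@proj_l_is_map false true true eq_refl)
             (@proj_r_is_map false true true eq_refl))
    as (h2 & Hh2 & Hp2 & Hq2 & _).
  destruct (U (test_ese true true true) proj_l proj_r
             (@proj_l_is_map true true true eq_refl)
             (@proj_r_is_map true true true eq_refl))
    as (h & _ & _ & _ & Hunique).
  assert (Hh12 : forall u, h1 u = h2 u).
  { intro u. rewrite (Hunique h1), (Hunique h2);
      first [ reflexivity | assumption
            | eapply is_map_test_ese_refine; [| eassumption]; finite_cases ]. }
  assert (Hq_top := Hq1 dtop). cbn in Hq_top. unfold pcomp in Hq_top.
  destruct (h1 dtop) as [d|] eqn:Hd; [| discriminate].
  assert (Hx1 : finite_configuration (test_ese true false false)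
                  (fun u => u = d00 \/ u = dtop))
    by (apply fin_ese_finite_configuration; finite_cases).
  assert (Hx2 : finite_configuration (test_ese false true true)
                  (fun u => u = d01 \/ u = d10 \/ u = dtop))
    by (apply fin_ese_finite_configuration; finite_cases).
  assert (Hmin : forall d', le D d' d -> d' = d).
  { intros d' Hle.
    destruct (map_image_down_closed Hh1 Hx1 (or_intror eq_refl) Hd Hle) as (u & Hu & Hhu).
    destruct (map_image_down_closed Hh2 Hx2 (or_intror (or_intror eq_refl))
                (eq_trans (eq_sym (Hh12 dtop)) Hd) Hle) as (v & Hv & Hhv).
    rewrite <- Hh12 in Hhv.
    assert (u = v) as <- by (apply (mediator_injective Hp1 Hq1); congruence).
    destruct Hu as [-> | ->]; [destruct Hv as [? | [? | ?]]; discriminate | congruence]. }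
  destruct (map_image_down_closed (Q := A) (q' := e0) Hq
              (minimal_finite_configuration Hmin) eq_refl (eq_sym Hq_top) eq_refl)
    as (d' & -> & Hd').
  congruence.
Qed.

Theorem mainTheorem8 :
  exists (A B C : ese) (f : ev A -> option (ev C)) (g : ev B -> option (ev C)),
    is_edc A /\ is_edc B /\
    (forall c1 c2 : ev C, eqv C c1 c2 <-> c1 = c2) /\
    is_map f /\ is_map g /\
    ~ has_pullback f g /\ ~ has_pseudo_pullback f g.
Proof.
  exists A, A, point, (fun _ => None), (fun _ => None).
  split; [exact A_edc|]. split; [exact A_edc|].
  split; [now intros [] []|].
  split; [apply undefined_is_map|]. split; [apply undefined_is_map|].
  split; intros (D & p & q & Hpb); apply (no_product_A (p := p) (proj1 (proj2 Hpb))).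
  - now apply is_pullback_undefined_product
      with (C := point) (f := fun _ => None) (g := fun _ => None).
  - now apply is_pseudo_pullback_undefined_product
      with (C := point) (f := fun _ => None) (g := fun _ => None).
Qed.
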